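(* Let $R$ be a principal ideal domain of odd or zero characteristic, let $V,W$ be free $R$-modules of finite rank, and let $\lambda=(\lambda_1,\dots,\lambda_l)$, $\mu=(\mu_1,\dots,\mu_m)$ be partitions of the same degree $r$. Define $\Phi_{\lambda,\mu}:\mathrm{Hom}_R(\Lambda^{\lambda}(V),\Lambda^{\mu}(W))\to\mathrm{Hom}_R(V^{\otimes r},W^{\otimes r})$ by $\phi\mapsto i_\mu\circ\phi\circ p_\lambda$. Then the image of $\Phi_{\lambda,\mu}$ equals $$\{\phi\in \mathrm{Hom}_R(V^{\otimes r},W^{\otimes r})\mid \tau_2\phi\tau_1=(-1)^{\tau_1}(-1)^{\tau_2}\phi\ \text{for all }\tau_1\in S_\lambda,\ \tau_2\in S_\mu\}.$$
   Context: For a tuple $\lambda=(\lambda_1,\dots,\lambda_l)$ of nonnegative integers with $|\lambda|=\lambda_1+\dots+\lambda_l=r$, $\Lambda^{\lambda}(V)=\Lambda^{\lambda_1}(V)\otimes\cdots\otimes\Lambda^{\lambda_l}(V)$. The embedding $i_p:\Lambda^p(V)\to V^{\otimes p}$ is $v_1\wedge\cdots\wedge v_p\mapsto\sum_{\sigma\in S_p}(-1)^\sigma v_{\sigma(1)}\otimes\cdots\otimes v_{\sigma(p)}$, and $i_\lambda=i_{\lambda_1}\otimes\cdots\otimes i_{\lambda_l}:\Lambda^\lambda(V)\to V^{\otimes r}$; $p_\lambda:V^{\otimes r}\to\Lambda^\lambda(V)$ is the canonical epimorphism (tensor product of the canonical projections $V^{\otimes\lambda_k}\to\Lambda^{\lambda_k}(V)$).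 $S_\lambda\le S_r$ is the Young subgroup preserving each of the consecutive intervals of $[1,r]$ of lengths $\lambda_1,\dots,\lambda_l$. The symmetric group $S_r$ acts on $V^{\otimes r}$ (and on $W^{\otimes r}$) by $\sigma(v_1\otimes\cdots\otimes v_r)=v_{\sigma^{-1}(1)}\otimes\cdots\otimes v_{\sigma^{-1}(r)}$, and $(-1)^\tau$ is the sign of $\tau$. *)

(* Free modules of finite rank are modelled by their standard
   coordinates: V = R^n, W = R^k, and R-linear maps between free modules with
   finite bases I, J are given by their coefficient functions (matrices). *)
From HB Require Import structures.
From mathcomp Require Import all_boot all_order all_algebra all_fingroup.
Set Implicit Arguments.
Unset Strict Implicit.
Unset Printing Implicit Defensive.
Import GRing.Theory.
Local Open Scope ring_scope.

Definition is_ideal (R : comPzRingType) (I : R -> Prop) : Prop :=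
  [/\ I 0, (forall x y, I x -> I y -> I (x + y)) & (forall a x, I x -> I (a * x))].

Definition principal_ideal_domain (R : idomainType) : Prop :=
  forall I : R -> Prop, is_ideal I -> exists a : R, forall x, I x <-> exists b, x = b * a.

Definition odd_or_zero_char (R : idomainType) : Prop :=
  forall p : nat, p \in [pchar R] -> odd p.

(* rhom R I J = Hom_R(R^(I), R^(J)); f j i = coefficient of e_j in f(e_i) *)
Definition rhom (R : Type) (I J : Type) := J -> I -> R.

Definition mcomp (R : nzSemiRingType) (I J K : finType) (A : rhom R J K) (B : rhom R I J)
  : rhom R I K := fun c a => \sum_(b : J) A c b * B b a.

(* basis of (R^n)^{⊗ r}: words u : [0,r) -> [0,n), e_u = e_{u 0} ⊗ ... ⊗ e_{u (r-1)} *)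
Notation word r n := {ffun 'I_r -> 'I_n}.

(* S_r acts on tensors: s(v_1⊗...⊗v_r) = v_{s^-1(1)}⊗...⊗v_{s^-1(r)},
   i.e. e_u |-> e_{u o s^-1} *)
Definition permact (R : nzSemiRingType) (r n : nat) (s : 'S_r)
  : rhom R (word r n) (word r n) :=
  fun u' u => (u' == [ffun i => u (s^-1 i)]%g)%:R.

(* index (0-based) of the consecutive interval of lengths lam_1, lam_2, ...
   containing position i *)
Definition blk (lam : seq nat) (r : nat) (i : 'I_r) : nat :=
  count (fun s => s <= i)%N (scanl addn 0%N lam).

Definition young (lam : seq nat) (r : nat) : {set 'S_r} :=
  [set s : 'S_r | [forall i, blk lam (s i) == blk lam i]].

(* its standard basis: e_{t_1} ∧ ... (block 1) ⊗ ... ⊗ (block l) with t strictly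
   increasing inside every block *)
Definition blockinc (lam : seq nat) (r n : nat) (t : word r n) : bool :=
  [forall i : 'I_r, forall j : 'I_r,
     ((blk lam i == blk lam j) && (i < j)%N) ==> (t i < t j)%N].

Notation ext_idx lam r n := {t : word r n | blockinc lam t}.

Definition wedge_coef (R : nzRingType) (lam : seq nat) (r n : nat)
  (t : ext_idx lam r n) (u : word r n) : R :=
  \sum_(s in young lam r) (-1) ^+ s * (u == [ffun i => val t (s i)])%:R.

(* i_lam : Lambda^lam(R^n) -> (R^n)^{⊗r},
   v_1∧...∧v_p |-> sum_s (-1)^s v_{s 1}⊗...⊗v_{s p} blockwise *)
Definition incl (R : nzRingType) (lam : seq nat) (r n : nat)
  : rhom R (ext_idx lam r n) (word r n) := fun u t => @wedge_coef R lam r n t u.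

(* p_lam : (R^n)^{⊗r} -> Lambda^lam(R^n), canonical projection
   e_{u_1}⊗...⊗e_{u_r} |-> (e_{u_1}∧...)⊗...; in the standard basis this is
   (-1)^s e_t if u = t o s with s in S_lam, and 0 otherwise *)
Definition proj (R : nzRingType) (lam : seq nat) (r n : nat)
  : rhom R (word r n) (ext_idx lam r n) := fun t u => @wedge_coef R lam r n t u.

Definition Phi (R : nzRingType) (lam mu : seq nat) (r n k : nat)
  (psi : rhom R (ext_idx lam r n) (ext_idx mu r k)) : rhom R (word r n) (word r k) :=
  mcomp (mcomp (@incl R mu r k) psi) (@proj R lam r n).

(* Inside the lambda-blocks a word
   either repeats a letter, or some g in S_lambda sorts it into a unique
   block-increasing word, i.e. into the index of a basis vector of
   Lambda^lambda(V).  A map satisfying the sign rule (in its source, and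
   likewise in its target) vanishes on words with a repeated letter in a block:
   the transposition of the two positions fixes the word but has sign -1, and
   2 <> 0 in R.  Hence such a map is determined by its coefficients between
   block-increasing words.  Every Phi(psi) satisfies the sign rule and has
   coefficients psi there, so psi is the restriction of the given map to
   these coefficients. *)

From HB Require Import structures.
From mathcomp Require Import all_boot all_order all_algebra all_fingroup.
From mathcomp Require Import zify.
Set Implicit Arguments.
Unset Strict Implicit.
Import GRing.Theory.

Section YoungSubgroup.
Variables (lam : seq nat) (r : nat).

Lemma youngP (s : 'S_r) :
  reflect (forall i, blk lam (s i) = blk lam i) (s \in young lam r).
Proof. by rewrite inE; apply: (iffP forallP) => H i; apply/eqP. Qed.

Lemma group_set_young : group_set (young lam r).
Proof.
apply/group_setP; split=> [|s t /youngP Hs /youngP Ht]; apply/youngP => i.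
  by rewrite perm1.
by rewrite permM Ht Hs.
Qed.

Canonical young_group := group group_set_young.

Lemma tperm_young i j : blk lam i = blk lam j -> tperm i j \in young lam r.
Proof. by move=> Eb; apply/youngP => l; case: tpermP => [->|->|]. Qed.

End YoungSubgroup.

Definition word_perm {r n} (u : word r n) (s : 'S_r) : word r n := [ffun i => u (s i)].

Lemma ltn_rearrange (i j a c : nat) : i < j -> c < a -> i * a + j * c < i * c + j * a.
Proof. by move=> Lij Lca; nia. Qed.

Section WordPerm.
Variables r n : nat.
Implicit Types (u : word r n) (s t : 'S_r) (i j : 'I_r).

Lemma word_permE u s i : word_perm u s i = u (s i).
Proof. by rewrite ffunE. Qed.

Lemma word_perm1 u : word_perm u 1%g = u.
Proof. by apply/ffunP => i; rewrite ffunE perm1. Qed.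

Lemma word_permM u s t : word_perm u (s * t)%g = word_perm (word_perm u t) s.
Proof. by apply/ffunP => i; rewrite !ffunE permM. Qed.

Lemma word_permK s : cancel (@word_perm r n ^~ s) (word_perm^~ s^-1%g).
Proof. by move=> u; rewrite -word_permM mulVg word_perm1. Qed.

Lemma word_permKV s : cancel (@word_perm r n ^~ s^-1%g) (word_perm^~ s).
Proof. by move=> u; rewrite -word_permM mulgV word_perm1. Qed.

Lemma word_perm_tperm u i j : u i = u j -> word_perm u (tperm i j) = u.
Proof. by move=> Eu; apply/ffunP => l; rewrite ffunE; case: tpermP => [->|->|]. Qed.

Definition word_weight u : nat := \sum_(i < r) i * u i.

Lemma word_weight_tperm u i j : i < j -> u j < u i ->
  word_weight u < word_weight (word_perm u (tperm i j)).
Proof.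
move=> Lij Luji; have Nij : i != j by rewrite neq_ltn Lij.
rewrite /word_weight (bigD1 i) // (bigD1 j) 1?eq_sym //= [in X in _ < X](bigD1 i) //.
rewrite [in X in _ < X](bigD1 j) 1?eq_sym //= !ffunE tpermL tpermR.
rewrite [in X in _ < X](eq_bigr (fun k : 'I_r => k * u k)); last first.
  by move=> k /andP [Nki Nkj]; rewrite word_permE tpermD // eq_sym.
by rewrite !addnA ltn_add2r ltn_rearrange.
Qed.

End WordPerm.

Lemma perm_block_mono_eq1 r (b : 'I_r -> nat) (g : 'S_r) :
  (forall i, b (g i) = b i) ->
  (forall i j, b i = b j -> i < j -> g i < g j) -> g = 1%g.
Proof.
move=> gb gmono; apply/permP => i; rewrite perm1; apply/eqP/negPn/negP => nfix.
(* [i0] is the least point moved by [g]; its preimage lies later in the same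
   block, against monotonicity. *)
have [i0 ni0 i0_min] := @arg_minnP _ i (fun k => g k != k) val nfix.
have below_i0 (j : 'I_r) : j < i0 -> g j = j.
  by move=> Lj; apply/eqP/negPn/negP => /i0_min; rewrite leqNgt Lj.
have Li0 : i0 < g i0.
  rewrite ltn_neqAle eq_sym val_eqE ni0 leqNgt; apply/negP => /below_i0 /perm_inj E.
  by rewrite E eqxx in ni0.
pose j := (g^-1)%g i0; have gj : g j = i0 by rewrite permKV.
have Nj : j != i0 by apply: contraNneq ni0 => Eji; rewrite -{1}Eji gj.
have Lj : i0 < j.
  rewrite ltn_neqAle eq_sym Nj leqNgt; apply/negP => /below_i0 Ej.
  by rewrite -Ej gj eqxx in Nj.
have Eb : b i0 = b j by rewrite -(gb j) gj.
by have := gmono _ _ Eb Lj; rewrite gj ltnNge ltnW.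
Qed.

Section BlockIncreasing.
Variables (lam : seq nat) (r n : nat).
Implicit Types (t x : word r n) (s g : 'S_r).

Lemma blockincP t :
  reflect (forall i j, blk lam i = blk lam j -> i < j -> t i < t j) (blockinc lam t).
Proof.
apply: (iffP forallP) => [H i j Eb Lij | H i]; last first.
  by apply/forallP => j; apply/implyP => /andP [/eqP]; apply: H.
by have /forallP /(_ j) := H i; rewrite Eb eqxx Lij; apply.
Qed.

Lemma blockinc_young_eq1 t t' g : blockinc lam t -> blockinc lam t' ->
  g \in young lam r -> word_perm t g = t' -> g = 1%g.
Proof.
move=> /blockincP t_inc /blockincP t'_inc /youngP gb Et'.
apply: (perm_block_mono_eq1 gb) => i j Eb Lij.
have := t'_inc _ _ Eb Lij; rewrite -Et' !word_permE.
have Eg : blk lam (g j) = blk lam (g i) by rewrite !gb.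
case: (ltngtP (g i) (g j)) => // [/(t_inc _ _ Eg) Lt | /val_inj /perm_inj Eij].
  by rewrite ltnNge ltnW.
by rewrite Eij ltnn in Lij.
Qed.

Lemma blockinc_sortable_or_rep x :
  (exists2 s, s \in young lam r & blockinc lam (word_perm x s)) \/
  (exists i j, [/\ i != j, blk lam i = blk lam j & x i = x j]).
Proof.
(* A maximizer of the weight has no descent inside a block: swapping the
   descent would increase the weight. *)
have [s Gs s_max] := @arg_maxnP _ 1%g (mem (young lam r))
  (fun s => word_weight (word_perm x s)) (group1 _).
have /youngP sb := Gs.
case s_inc: (blockinc lam (word_perm x s)); first by left; exists s.
move/negbT: s_inc; rewrite negb_forall => /existsP [i]; rewrite negb_forall.
move=> /existsP [j]; rewrite negb_imply -leqNgt => /andP [/andP [/eqP Eb Lij]].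
rewrite leq_eqVlt => /orP [/eqP/val_inj Exs | Lxs].
  right; exists (s i), (s j); split; last by move: Exs; rewrite !word_permE => ->.
    by rewrite (inj_eq perm_inj) neq_ltn Lij.
  by rewrite !sb.
have Gts : (tperm i j * s)%g \in young lam r by rewrite groupM ?tperm_young.
by have := s_max _ Gts; rewrite word_permM /= leqNgt word_weight_tperm.
Qed.

End BlockIncreasing.

Local Open Scope ring_scope.

Section Deltas.
Variables (R : nzSemiRingType) (T : finType).

Lemma sum_delta_mull (F : T -> R) a0 : \sum_a (a == a0)%:R * F a = F a0.
Proof.
by rewrite (bigD1 a0) //= eqxx mul1r big1 ?addr0 // => a /negbTE ->; rewrite mul0r.
Qed.

Lemma sum_mulr_delta (F : T -> R) a0 : \sum_a F a * (a == a0)%:R = F a0.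
Proof.
by rewrite (bigD1 a0) //= eqxx mulr1 big1 ?addr0 // => a /negbTE ->; rewrite mulr0.
Qed.

End Deltas.

Lemma mcomp_permactE (R : nzSemiRingType) r n k (f : rhom R (word r n) (word r k))
    (t1 t2 : 'S_r) y x :
  mcomp (mcomp (@permact R r k t2) f) (@permact R r n t1) y x
  = f (word_perm y t2) (word_perm x t1^-1).
Proof.
rewrite /mcomp sum_mulr_delta.
under eq_bigr => c _ do rewrite /permact eq_sym (can2_eq (word_permKV t2) (word_permK t2)).
by rewrite sum_delta_mull.
Qed.

Section WedgeCoef.
Variables (R : nzRingType) (lam : seq nat) (r n : nat).
Implicit Types (t u : ext_idx lam r n) (x : word r n).

Lemma wedge_coefE t x :
  wedge_coef R t x = \sum_(s in young lam r) (-1) ^+ s * (x == word_perm (val t) s)%:R.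
Proof. by []. Qed.

Lemma wedge_coef_perm t x g : g \in young lam r ->
  wedge_coef R t (word_perm x g) = (-1) ^+ g * wedge_coef R t x.
Proof.
move=> Gg; rewrite !wedge_coefE mulr_sumr (reindex_inj (mulgI g)) /=.
apply: eq_big => [s | s Gs]; first by rewrite groupMl.
by rewrite word_permM (inj_eq (can_inj (word_permK g))) odd_permM signr_addb mulrA.
Qed.

Lemma wedge_coef_blockinc t u : wedge_coef R t (val u) = (t == u)%:R.
Proof.
rewrite wedge_coefE (bigD1 1%g) ?group1 //= big1 => [|s /andP [Gs Ns]].
  by rewrite odd_perm1 mul1r word_perm1 addr0 eq_sym.
case: eqP => [Eu | _]; last by rewrite mulr0.
by rewrite (blockinc_young_eq1 (valP t) (valP u) Gs (esym Eu)) eqxx in Ns.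
Qed.

End WedgeCoef.

Definition alternating (R : nzRingType) (lam : seq nat) r n (g : word r n -> R) :=
  forall s x, s \in young lam r -> g (word_perm x s) = (-1) ^+ s * g x.

Lemma pchar_odd_natr2_neq0 (R : idomainType) : odd_or_zero_char R -> 2%:R != 0 :> R.
Proof.
by move=> hchar; apply/negP => /eqP two0; have := hchar 2; rewrite inE two0 eqxx => /(_ isT).
Qed.

Section Alternating.
Variables (R : idomainType) (lam : seq nat) (r n : nat).
Hypothesis two_neq0 : 2%:R != 0 :> R.
Implicit Types (g h : word r n -> R) (x : word r n).

Lemma alternating_rep g x i j : alternating lam g ->
  i != j -> blk lam i = blk lam j -> x i = x j -> g x = 0.
Proof.
move=> g_alt Nij Eb Ex.
have := g_alt _ x (tperm_young Eb); rewrite word_perm_tperm // odd_tperm Nij expr1 mulN1r.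
by move/eqP; rewrite -subr_eq0 opprK -mulr2n -mulr_natl mulf_eq0 (negbTE two_neq0) => /eqP.
Qed.

Lemma alternating_eq g h : alternating lam g -> alternating lam h ->
  (forall t : ext_idx lam r n, g (val t) = h (val t)) -> g =1 h.
Proof.
move=> g_alt h_alt gh x.
have [[s Gs x_inc] | [i [j [Nij Eb Ex]]]] := blockinc_sortable_or_rep lam x.
  have -> : x = word_perm (word_perm x s) s^-1 by rewrite word_permK.
  rewrite g_alt ?groupV // h_alt ?groupV //; congr (_ * _).
  exact: (gh (exist (fun t => blockinc lam t) _ x_inc)).
by rewrite (alternating_rep g_alt Nij Eb Ex) (alternating_rep h_alt Nij Eb Ex).
Qed.

End Alternating.

Section PhiAlternating.
Variables (R : comNzRingType) (lam mu : seq nat) (r n k : nat).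
Variable psi : rhom R (ext_idx lam r n) (ext_idx mu r k).

Lemma PhiE y x : Phi psi y x =
  \sum_a (\sum_c wedge_coef R c y * psi c a) * wedge_coef R a x.
Proof. by []. Qed.

Lemma Phi_alternating_src y : alternating lam (Phi psi y).
Proof.
move=> s x Gs; rewrite !PhiE mulr_sumr; apply: eq_bigr => a _.
by rewrite wedge_coef_perm // mulrCA.
Qed.

Lemma Phi_alternating_tgt x : alternating mu (Phi psi ^~ x).
Proof.
move=> s y Gs; rewrite !PhiE mulr_sumr; apply: eq_bigr => a _.
rewrite [RHS]mulrA; congr (_ * _); rewrite mulr_sumr; apply: eq_bigr => c _.
by rewrite wedge_coef_perm // mulrA.
Qed.

Lemma Phi_blockinc t' t : Phi psi (val t') (val t) = psi t' t.
Proof.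
rewrite PhiE; under eq_bigr => a _ do rewrite wedge_coef_blockinc.
rewrite sum_mulr_delta; under eq_bigr => c _ do rewrite wedge_coef_blockinc.
exact: sum_delta_mull.
Qed.

End PhiAlternating.

Lemma young_alternatingP (R : comNzRingType) (lam mu : seq nat) (r n k : nat)
    (f : rhom R (word r n) (word r k)) :
  (forall (t1 t2 : 'S_r), t1 \in young lam r -> t2 \in young mu r ->
     forall y x, mcomp (mcomp (@permact R r k t2) f) (@permact R r n t1) y x
                 = (-1) ^+ t1 * (-1) ^+ t2 * f y x)
  <-> (forall y, alternating lam (f y)) /\ (forall x, alternating mu (f ^~ x)).
Proof.
split=> [f_alt | [f_src f_tgt] t1 t2 G1 G2 y x].
  split=> [y s x Gs | x s y Gs].
    by have := f_alt _ 1%g (groupVr Gs) (group1 _) y x; rewrite mcomp_permactE invgK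
      word_perm1 odd_perm1 odd_permV mulr1.
  by have := f_alt 1%g _ (group1 _) Gs y x; rewrite mcomp_permactE invg1
    word_perm1 odd_perm1 mul1r.
by rewrite mcomp_permactE f_tgt // f_src ?groupV // odd_permV mulrCA mulrA.
Qed.

Theorem lemma1p1 (R : idomainType)
  (hpid : principal_ideal_domain R) (hchar : odd_or_zero_char R)
  (n k r : nat) (lam mu : seq nat)
  (hlam : sorted geq lam) (hmu : sorted geq mu)
  (slam : sumn lam = r) (smu : sumn mu = r)
  (f : rhom R (word r n) (word r k)) :
  (exists psi : rhom R (ext_idx lam r n) (ext_idx mu r k),
      forall y x, Phi psi y x = f y x)
  <->
  (forall (t1 t2 : 'S_r), t1 \in young lam r -> t2 \in young mu r ->
     forall y x, mcomp (mcomp (@permact R r k t2) f) (@permact R r n t1) y x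
                 = (-1) ^+ t1 * (-1) ^+ t2 * f y x).
Proof.
have two_neq0 := pchar_odd_natr2_neq0 hchar.
split=> [[psi Phi_f] | /young_alternatingP [f_src f_tgt]].
  apply/young_alternatingP; split=> [y | x] s x' Gs; rewrite -!Phi_f.
    exact: Phi_alternating_src.
  exact: Phi_alternating_tgt.
exists (fun t' t => f (val t') (val t)) => y x.
apply: (alternating_eq two_neq0 (Phi_alternating_tgt _ x) (f_tgt x)) => t'.
apply: (alternating_eq two_neq0 (Phi_alternating_src _ _) (f_src _)) => t.
exact: Phi_blockinc.
Qed.
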